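(* Let $n,l_1,u_1,l_2,u_2$ be non-negative integers and $(f(k))$, $(g(k))$ complex sequences such that $\sum_{k=l_1}^{u_1}f(k)t^k(1-t)^{n-k}=\sum_{k=l_2}^{u_2}g(k)t^k$ for all complex $t$. Let $s\in\mathbb{C}\setminus\mathbb{Z}^{-}$, $s\neq0$. Then \[ \sum_{k=l_1}^{u_1}\frac{f(k)}{(k+s)\binom{n+s}{k+s}}=\sum_{k=l_2}^{u_2}\frac{g(k)}{k+s},\qquad \sum_{k=l_1}^{u_1}\frac{f(k)}{(k+1)\binom{n+1}{k+1}}=\sum_{k=l_2}^{u_2}\frac{g(k)}{k+1}, \] \[ \sum_{k=l_1}^{u_1}f(k)\frac{H_{n-k}-H_{n+s}}{(k+s)\binom{n+s}{k+s}}=-\sum_{k=l_2}^{u_2}g(k)\frac{H_{k+s}}{k+s},\qquad \sum_{k=l_1}^{u_1}f(k)\frac{H_{n-k}-H_{n+1}}{(k+1)\binom{n+1}{k+1}}=-\sum_{k=l_2}^{u_2}g(k)\frac{H_{k+1}}{k+1}. \]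
   Context: $\mathbb{Z}^{-}$ denotes the set of negative integers. For complex $z$ not a negative integer, $H_z=\psi(z+1)+\gamma$; for integers $m\ge0$, $H_m=\sum_{j=1}^m1/j$. Binomial coefficients with complex entries: $\binom{x}{y}=\frac{\Gamma(x+1)}{\Gamma(y+1)\Gamma(x-y+1)}$. *)

From Stdlib Require Import Reals Arith Factorial.
From Coquelicot Require Import Coquelicot.

Open Scope C_scope.

Definition Clim (u : nat -> C) : C :=
  @lim (CompleteNormedModule.CompleteSpace _ C_CompleteNormedModule) (filtermap u eventually).

(* a^z for a real a > 0 and complex z:  exp(z ln a). *)
Definition Rcpow (a : R) (z : C) : C :=
  (exp (Re z * ln a) * cos (Im z * ln a),
   exp (Re z * ln a) * sin (Im z * ln a))%R.

Fixpoint Cpoch0 (z : C) (m : nat) : C :=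
  match m with
  | O => z
  | S m' => Cpoch0 z m' * (z + RtoC (INR m))
  end.

(* Euler's Gamma function via the Gauss limit formula
   Gamma(z) = lim_{m->oo} m! m^z / (z (z+1) ... (z+m)),
   valid for z not in {0,-1,-2,...}. *)
Definition CGamma (z : C) : C :=
  Clim (fun m => RtoC (INR (Factorial.fact m)) * Rcpow (INR m) z
                 / Cpoch0 z m).

Definition Cbinom (x y : C) : C :=
  CGamma (x + 1) / (CGamma (y + 1) * CGamma (x - y + 1)).

Definition Hnat (m : nat) : C :=
  sum_n_m (fun j => / RtoC (INR j)) 1 m.

(* Harmonic numbers of complex argument z not a negative integer:
   H_z = psi(z+1) + gamma = sum_{j>=1} (1/j - 1/(j+z)). *)
Definition HC (z : C) : C :=
  Clim (fun N => sum_n_m (fun j => / RtoC (INR j) - / (RtoC (INR j) + z)) 1 N).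

(* Pair the coefficients of a polynomial of degree at most N with weights w_j.
   Since both sides of the hypothesis are the same polynomial, pairing gives
   sum_k f(k) <w, t^k (1-t)^(n-k)> = sum_k g(k) w_k for every w.  With
   w_j = 1/(j+x), which is integration against t^(x-1) on [0,1], the pairing of
   t^k (1-t)^m is the Beta value B(k+x, m+1) = m!/((k+x)(k+x+1)...(k+x+m)); with
   w_j = h_j/(j+x), where h_(j+1) = h_j + 1/(j+1+x), it is
   (h_(k+m) - H_m) B(k+x, m+1).  Both follow by induction on m from
   t^k (1-t)^(m+1) = t^k (1-t)^m - t^(k+1) (1-t)^m.  Take x = s, h_j = H_(j+s) and
   x = 1, h_j = H_(j+1), and use 1/((k+x) binom(n+x, k+x)) = B(k+x, n-k+1).

   For complex x this last identity needs Gamma(w+1) = w Gamma(w) and Gamma(w) <> 0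
   for Gauss's limit defining Gamma.  The ratio of consecutive terms of Gauss's
   sequence is 1 + O(1/m^2), so the sequence converges to a nonzero limit.  Similarly,
   H_(z+1) = H_z + 1/(z+1) for the series defining H_z. *)

From Stdlib Require Import Reals Lia Lra Arith.
From Coquelicot Require Import Coquelicot.
Open Scope C_scope.

(* Coquelicot types sums in [AbelianMonoid.sort C_AbelianMonoid]; [ring] and [field]
   need the equation stated in [C]. *)
Ltac ring_C := match goal with |- @eq _ ?a ?b => change (@eq C a b) end; ring.
Ltac field_C := match goal with |- @eq _ ?a ?b => change (@eq C a b) end; field.

Lemma sum_n_m_Cmult_l (a : C) (u : nat -> C) n m :
  sum_n_m (fun k => a * u k) n m = a * sum_n_m u n m.
Proof. exact (sum_n_m_mult_l (K := C_Ring) a u n m). Qed.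

Lemma sum_n_m_Cmult_r (a : C) (u : nat -> C) n m :
  sum_n_m (fun k => u k * a) n m = sum_n_m u n m * a.
Proof. exact (sum_n_m_mult_r (K := C_Ring) a u n m). Qed.

Lemma sum_n_m_Cplus (u v : nat -> C) n m :
  sum_n_m (fun k => u k + v k) n m = sum_n_m u n m + sum_n_m v n m.
Proof. exact (sum_n_m_plus (G := C_AbelianMonoid) u v n m). Qed.

Lemma sum_n_m_Cminus (u v : nat -> C) n m :
  sum_n_m (fun k => u k - v k) n m = sum_n_m u n m - sum_n_m v n m.
Proof.
  replace (sum_n_m u n m - sum_n_m v n m)
    with (sum_n_m u n m + (- (1)) * sum_n_m v n m) by ring.
  rewrite <- sum_n_m_Cmult_l, <- sum_n_m_Cplus.
  apply sum_n_m_ext; intros; ring_C.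
Qed.

Lemma sum_n_m_Copp (u : nat -> C) n m : sum_n_m (fun k => - u k) n m = - sum_n_m u n m.
Proof.
  replace (- sum_n_m u n m) with (- (1) * sum_n_m u n m) by ring.
  rewrite <- sum_n_m_Cmult_l. apply sum_n_m_ext; intros; ring_C.
Qed.

Lemma sum_n_m_C0 (u : nat -> C) n m :
  (forall k, (n <= k <= m)%nat -> u k = 0) -> @eq C (sum_n_m u n m) 0.
Proof.
  intros H. transitivity (sum_n_m (fun _ : nat => (zero : C)) n m).
  - apply sum_n_m_ext_loc; auto.
  - exact (sum_n_m_const_zero (G := C_AbelianMonoid) n m).
Qed.

Lemma sum_n_m_swap (h : nat -> nat -> C) (a b p q : nat) :
  sum_n_m (fun j => sum_n_m (fun k => h k j) a b) p q =
  sum_n_m (fun k => sum_n_m (fun j => h k j) p q) a b.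
Proof.
  destruct (le_lt_dec a b) as [Hab|Hab].
  - induction b as [|b IH].
    + assert (a = 0)%nat by lia. subst. rewrite sum_n_n.
      apply sum_n_m_ext. intros. now rewrite sum_n_n.
    + destruct (Nat.eq_dec a (S b)) as [->|Hne].
      * rewrite sum_n_n. apply sum_n_m_ext; intros; now rewrite sum_n_n.
      * rewrite sum_n_Sm, <- IH by lia. rewrite <- sum_n_m_plus.
        apply sum_n_m_ext. intros. now rewrite sum_n_Sm by lia.
  - rewrite (sum_n_m_zero _ a b) by lia.
    apply sum_n_m_C0. intros. now rewrite sum_n_m_zero.
Qed.

Lemma RtoC_neq0 (r : R) : r <> 0%R -> RtoC r <> 0.
Proof. intros H E. apply H. now injection E. Qed.

Lemma RtoC_INR_S (m : nat) : RtoC (INR (S m)) = RtoC (INR m) + 1.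
Proof. now rewrite S_INR, RtoC_plus. Qed.

Lemma RtoC_INR_add1 (k : nat) : RtoC (INR (k + 1)) = RtoC (INR k) + 1.
Proof. rewrite Nat.add_1_r. apply RtoC_INR_S. Qed.

Lemma RtoC_INR_S_add (x : C) (k : nat) : RtoC (INR (S k)) + x = (RtoC (INR k) + x) + 1.
Proof. rewrite RtoC_INR_S. ring. Qed.

Lemma RtoC_INR_plus (a b : nat) : RtoC (INR (a + b)) = RtoC (INR a) + RtoC (INR b).
Proof. now rewrite plus_INR, RtoC_plus. Qed.

Lemma RtoC_INR_S_neq0 (m : nat) : RtoC (INR (S m)) <> 0.
Proof. apply RtoC_neq0, not_0_INR. lia. Qed.

Lemma RtoC_fact_neq0 (m : nat) : RtoC (INR (fact m)) <> 0.
Proof. apply RtoC_neq0, INR_fact_neq_0. Qed.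

Lemma Cmult_neq0 (a b : C) : a <> 0 -> b <> 0 -> a * b <> 0.
Proof. intros Ha Hb E. apply Ha. transitivity (a * b / b); [field | rewrite E; field]; exact Hb. Qed.

Lemma Cdiv_neq0 (a b : C) : a <> 0 -> b <> 0 -> a / b <> 0.
Proof. intros Ha Hb E. apply Ha. transitivity (a / b * b); [field | rewrite E; ring]; exact Hb. Qed.

(** * Polynomials as coefficient sequences *)

(* For [w = Cpow t] this evaluates at [t] the polynomial with coefficients [c]. *)
Definition coef_pair (N : nat) (w c : nat -> C) : C := sum_n_m (fun j => c j * w j) 0 N.

Lemma coef_pair_lincomb N w (a : nat -> C) (c : nat -> nat -> C) l u :
  coef_pair N w (fun j => sum_n_m (fun k => a k * c k j) l u)
  = sum_n_m (fun k => a k * coef_pair N w (c k)) l u.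
Proof.
  unfold coef_pair.
  transitivity (sum_n_m (fun j => sum_n_m (fun k => a k * c k j * w j) l u) 0 N).
  - apply sum_n_m_ext. intros j. now rewrite <- sum_n_m_Cmult_r.
  - rewrite sum_n_m_swap. apply sum_n_m_ext. intros k.
    rewrite <- sum_n_m_Cmult_l. apply sum_n_m_ext. intros. ring_C.
Qed.

Lemma coef_pair_minus N w (c d : nat -> C) :
  coef_pair N w (fun j => c j - d j) = coef_pair N w c - coef_pair N w d.
Proof.
  unfold coef_pair. rewrite <- sum_n_m_Cminus. apply sum_n_m_ext. intros. ring_C.
Qed.

Lemma coef_pair_S N w c :
  coef_pair (S N) w c = c 0%nat * w 0%nat + coef_pair N (fun j => w (S j)) (fun j => c (S j)).
Proof. unfold coef_pair. rewrite sum_Sn_m, <- sum_n_m_S by lia. reflexivity. Qed.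

Definition monomial (k j : nat) : C := if Nat.eqb j k then 1 else 0.

Lemma coef_pair_monomial N w k : (k <= N)%nat -> coef_pair N w (monomial k) = w k.
Proof.
  unfold coef_pair, monomial. induction N as [|N IH]; intros Hk.
  - assert (k = 0%nat) by lia. subst. rewrite sum_n_n. simpl. ring_C.
  - rewrite sum_n_Sm by lia. destruct (Nat.eq_dec k (S N)) as [->|Hne].
    + rewrite sum_n_m_C0, Nat.eqb_refl.
      * change (0 + 1 * w (S N) = w (S N)). ring.
      * intros j Hj. replace (Nat.eqb j (S N)) with false by (symmetry; apply Nat.eqb_neq; lia).
        ring_C.
    + rewrite IH by lia. replace (Nat.eqb (S N) k) with false by (symmetry; apply Nat.eqb_neq; lia).
      change (w k + 0 * w (S N) = w k). ring.
Qed.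

Fixpoint bern_coef (k m : nat) : nat -> C :=
  match m with
  | O => monomial k
  | S m' => fun j => bern_coef k m' j - bern_coef (S k) m' j
  end.

Lemma coef_pair_bern_pow N (t : C) k m : (k + m <= N)%nat ->
  coef_pair N (Cpow t) (bern_coef k m) = t ^ k * (1 - t) ^ m.
Proof.
  revert k. induction m as [|m IH]; intros k Hk; simpl bern_coef.
  - rewrite coef_pair_monomial by lia. ring.
  - rewrite coef_pair_minus, !IH, !Cpow_S by lia. ring.
Qed.

Lemma Cmod_eq0_of_small (a : C) (M : R) :
  (forall r : R, (0 < r < 1)%R -> (Cmod a <= r * M)%R) -> a = 0.
Proof.
  intros H. destruct (Ceq_dec a 0) as [E|E]; [exact E|exfalso].
  assert (Ha : (0 < Cmod a)%R) by now apply Cmod_gt_0.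
  set (r := (Cmod a / (Cmod a + Rabs M + 1))%R).
  assert (Hr : (0 < r < 1)%R).
  { unfold r. pose proof (Rabs_pos M). split.
    - apply Rdiv_lt_0_compat; lra.
    - apply Rmult_lt_reg_r with (Cmod a + Rabs M + 1)%R; [lra|]. field_simplify; lra. }
  specialize (H r Hr).
  assert (r * M < Cmod a)%R.
  { apply Rle_lt_trans with (r * Rabs M)%R.
    - apply Rmult_le_compat_l; [lra | apply Rle_abs].
    - unfold r. apply Rmult_lt_reg_r with (Cmod a + Rabs M + 1)%R.
      + pose proof (Rabs_pos M). lra.
      + field_simplify; pose proof (Rabs_pos M); nra. }
  lra.
Qed.

Lemma coef_pair_pow_bound N (t : C) c : (Cmod t <= 1)%R ->
  (Cmod (coef_pair N (Cpow t) c) <= sum_n_m (fun j => Cmod (c j)) 0 N)%R.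
Proof.
  intros Ht. eapply Rle_trans; [apply (norm_sum_n_m (V := C_NormedModule)) |].
  apply sum_n_m_le. intros k. change (Cmod (c k * t ^ k) <= Cmod (c k))%R.
  rewrite Cmod_mult, Cmod_pow. rewrite <- (Rmult_1_r (Cmod (c k))) at 2.
  apply Rmult_le_compat_l; [apply Cmod_ge_0|].
  rewrite <- (pow1 k). apply pow_incr. split; [apply Cmod_ge_0 | exact Ht].
Qed.

Lemma poly_coef_eq0 N : forall c : nat -> C,
  (forall t : C, t <> 0 -> coef_pair N (Cpow t) c = 0) -> forall j, (j <= N)%nat -> c j = 0.
Proof.
  induction N as [|N IH]; intros c Hc j Hj.
  - assert (j = 0%nat) by lia. subst. rewrite <- (Hc 1) by (apply RtoC_neq0; lra).
    unfold coef_pair. rewrite sum_n_n. simpl. ring.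
  - set (q t := coef_pair N (Cpow t) (fun j => c (S j))).
    assert (Hsplit : forall t, coef_pair (S N) (Cpow t) c = c 0%nat + t * q t).
    { intros t. rewrite coef_pair_S. unfold q, coef_pair. rewrite <- sum_n_m_Cmult_l.
      simpl. f_equal; [ring | apply sum_n_m_ext; intros; simpl; ring_C]. }
    assert (Hc0 : c 0%nat = 0).
    { apply (Cmod_eq0_of_small _ (sum_n_m (fun j => Cmod (c (S j))) 0 N)). intros r Hr.
      assert (Hr0 : RtoC r <> 0) by (apply RtoC_neq0; lra).
      replace (c 0%nat) with (- (RtoC r * q r)).
      - rewrite Cmod_opp, Cmod_mult, Cmod_R, Rabs_pos_eq by lra.
        apply Rmult_le_compat_l; [lra|]. apply coef_pair_pow_bound.
        rewrite Cmod_R, Rabs_pos_eq; lra.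
      - rewrite <- (Cplus_0_l (- _)), <- (Hc r Hr0), Hsplit. ring. }
    destruct j as [|j]; [exact Hc0|].
    apply (IH (fun j => c (S j))); [|lia]. intros t Ht.
    assert (E : t * q t = 0) by (rewrite <- (Hc t Ht), Hsplit, Hc0; ring).
    destruct (Ceq_dec (q t) 0) as [Z|Z]; [exact Z | now destruct (Cmult_neq0 t (q t) Ht Z)].
Qed.

Lemma coef_pair_unique N (c d : nat -> C) :
  (forall t : C, coef_pair N (Cpow t) c = coef_pair N (Cpow t) d) ->
  forall w, coef_pair N w c = coef_pair N w d.
Proof.
  intros H w.
  assert (Hcd : forall j, (j <= N)%nat -> c j - d j = 0).
  { apply poly_coef_eq0. intros t _. rewrite coef_pair_minus, H. ring. }
  apply Ceq_minus. rewrite <- coef_pair_minus. unfold coef_pair.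
  apply sum_n_m_C0. intros j Hj. rewrite Hcd by lia. ring.
Qed.

Section BernsteinTransfer.

Variables (n l1 u1 l2 u2 : nat) (f g : nat -> C).
Hypothesis Hu1 : (u1 <= n)%nat.
Hypothesis Hid : forall t : C,
  sum_n_m (fun k => f k * pow_n t k * pow_n (1 - t) (n - k)) l1 u1
  = sum_n_m (fun k => g k * pow_n t k) l2 u2.

Lemma bernstein_transfer (w : nat -> C) :
  sum_n_m (fun k => f k * coef_pair (n + u2) w (bern_coef k (n - k))) l1 u1
  = sum_n_m (fun k => g k * w k) l2 u2.
Proof.
  set (N := (n + u2)%nat).
  assert (HidC : forall t : C, sum_n_m (fun k => f k * t ^ k * (1 - t) ^ (n - k)) l1 u1
                               = sum_n_m (fun k => g k * t ^ k) l2 u2) by exact Hid.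
  rewrite <- coef_pair_lincomb.
  transitivity (coef_pair N w (fun j => sum_n_m (fun k => g k * monomial k j) l2 u2)).
  - apply coef_pair_unique. intros t. rewrite !coef_pair_lincomb.
    transitivity (sum_n_m (fun k => f k * t ^ k * (1 - t) ^ (n - k)) l1 u1).
    + apply sum_n_m_ext_loc. intros k Hk.
      rewrite coef_pair_bern_pow by (unfold N; lia). ring_C.
    + rewrite HidC. apply sum_n_m_ext_loc. intros k Hk.
      rewrite coef_pair_monomial by (unfold N; lia). reflexivity.
  - rewrite coef_pair_lincomb. apply sum_n_m_ext_loc. intros k Hk.
    rewrite coef_pair_monomial by (unfold N; lia). reflexivity.
Qed.

End BernsteinTransfer.

(** * Pochhammer symbols and Beta values *)

Definition avoids_nonpos_int (y : C) : Prop := forall j : nat, y + RtoC (INR j) <> 0.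

Lemma avoids_nonpos_int_neq0 y : avoids_nonpos_int y -> y <> 0.
Proof. intros Hy E. apply (Hy 0%nat). rewrite E. simpl. ring. Qed.

Lemma avoids_nonpos_int_shift y k :
  avoids_nonpos_int y -> avoids_nonpos_int (y + RtoC (INR k)).
Proof.
  intros Hy j. replace (y + RtoC (INR k) + RtoC (INR j)) with (y + RtoC (INR (k + j))).
  - apply Hy.
  - rewrite RtoC_INR_plus. ring.
Qed.

Lemma avoids_nonpos_int_INR_add x k :
  avoids_nonpos_int x -> avoids_nonpos_int (RtoC (INR k) + x).
Proof. rewrite Cplus_comm. apply avoids_nonpos_int_shift. Qed.

Lemma avoids_nonpos_int_add1 y : avoids_nonpos_int y -> avoids_nonpos_int (y + 1).
Proof. intros Hy. exact (avoids_nonpos_int_shift y 1 Hy). Qed.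

Lemma avoids_nonpos_int_1 : avoids_nonpos_int 1.
Proof. intros j. rewrite Cplus_comm, <- RtoC_INR_S. apply RtoC_neq0, not_0_INR. lia. Qed.

Lemma avoids_nonpos_int_intro (s : C) :
  s <> 0 -> (forall m : nat, s <> - RtoC (INR (S m))) -> avoids_nonpos_int s.
Proof.
  intros Hs0 Hs [|j] E.
  - apply Hs0. rewrite <- E. simpl. ring.
  - apply (Hs j). rewrite <- (Cplus_0_l (- _)), <- E. ring.
Qed.

Lemma Cpoch0_S y m : Cpoch0 y (S m) = Cpoch0 y m * (y + RtoC (INR (S m))).
Proof. reflexivity. Qed.

Lemma Cpoch0_shift y m : Cpoch0 y (S m) = y * Cpoch0 (y + 1) m.
Proof.
  induction m as [|m IH].
  - simpl. ring.
  - rewrite Cpoch0_S, IH, Cpoch0_S, (RtoC_INR_S (S m)). ring.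
Qed.

Lemma Cpoch0_neq0 y m : avoids_nonpos_int y -> Cpoch0 y m <> 0.
Proof.
  intros Hy. induction m as [|m IH].
  - now apply avoids_nonpos_int_neq0.
  - rewrite Cpoch0_S. now apply Cmult_neq0.
Qed.

Ltac side_neq0 :=
  repeat split; try assumption; try match goal with
  | H : avoids_nonpos_int ?y |- ?y + _ <> _ => apply H
  | H : avoids_nonpos_int ?y |- ?y <> _ => exact (avoids_nonpos_int_neq0 y H)
  | H : avoids_nonpos_int ?y |- Cpoch0 ?y _ <> _ => exact (Cpoch0_neq0 _ _ H)
  | |- RtoC (INR (S _)) <> _ => apply RtoC_INR_S_neq0
  | |- RtoC (INR (fact _)) <> _ => apply RtoC_fact_neq0
  end.

(* The Beta value [B(y, m+1)]. *)
Definition beta_nat (m : nat) (y : C) : C := RtoC (INR (fact m)) / Cpoch0 y m.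

Lemma Hnat_0 : Hnat 0 = 0.
Proof. unfold Hnat. now rewrite sum_n_m_zero by lia. Qed.

Lemma Hnat_S m : Hnat (S m) = Hnat m + / RtoC (INR (S m)).
Proof. unfold Hnat. now rewrite sum_n_Sm by lia. Qed.

Section BetaNat.

Variables (m : nat) (y : C).
Hypothesis Hy : avoids_nonpos_int y.

Lemma beta_nat_S :
  beta_nat (S m) y = beta_nat m y * RtoC (INR (S m)) / (y + RtoC (INR (S m))).
Proof.
  unfold beta_nat. rewrite Cpoch0_S, fact_simpl, mult_INR, RtoC_mult.
  field. side_neq0.
Qed.

Lemma beta_nat_add1 : beta_nat m (y + 1) = beta_nat m y * y / (y + RtoC (INR (S m))).
Proof.
  unfold beta_nat.
  assert (E : Cpoch0 (y + 1) m = Cpoch0 y m * (y + RtoC (INR (S m))) / y).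
  { rewrite <- Cpoch0_S, Cpoch0_shift. field. side_neq0. }
  rewrite E. field. side_neq0.
Qed.

Lemma beta_nat_diff : beta_nat m y - beta_nat m (y + 1) = beta_nat (S m) y.
Proof.
  rewrite beta_nat_S, beta_nat_add1. field. side_neq0.
Qed.

Lemma beta_nat_harmonic_diff (a : C) :
  (a - Hnat m) * beta_nat m y - (a + / (y + RtoC (INR (S m))) - Hnat m) * beta_nat m (y + 1)
  = (a + / (y + RtoC (INR (S m))) - Hnat (S m)) * beta_nat (S m) y.
Proof.
  rewrite Hnat_S, beta_nat_S, beta_nat_add1. field. side_neq0.
Qed.

End BetaNat.

(** * Pairing Bernstein polynomials with Beta weights *)

Section BernsteinBeta.

Variable x : C.
Hypothesis Hx : avoids_nonpos_int x.

Lemma coef_pair_bern_inv N k m : (k + m <= N)%nat ->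
  coef_pair N (fun j => / (RtoC (INR j) + x)) (bern_coef k m) = beta_nat m (RtoC (INR k) + x).
Proof.
  revert k. induction m as [|m IH]; intros k Hk; simpl bern_coef.
  - rewrite coef_pair_monomial by lia. unfold beta_nat. simpl.
    assert (H := avoids_nonpos_int_INR_add x k Hx). field_C. side_neq0.
  - rewrite coef_pair_minus, !IH, RtoC_INR_S_add by lia.
    apply beta_nat_diff, avoids_nonpos_int_INR_add, Hx.
Qed.

Variable hh : nat -> C.
Hypothesis Hhh : forall j, hh (S j) = hh j + / (RtoC (INR (S j)) + x).

Lemma coef_pair_bern_harmonic N k m : (k + m <= N)%nat ->
  coef_pair N (fun j => hh j / (RtoC (INR j) + x)) (bern_coef k m)
  = (hh (k + m)%nat - Hnat m) * beta_nat m (RtoC (INR k) + x).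
Proof.
  revert k. induction m as [|m IH]; intros k Hk; simpl bern_coef.
  - rewrite coef_pair_monomial, Hnat_0, Nat.add_0_r by lia. unfold beta_nat. simpl.
    assert (H := avoids_nonpos_int_INR_add x k Hx). field_C. side_neq0.
  - rewrite coef_pair_minus, !IH, RtoC_INR_S_add by lia.
    replace (S k + m)%nat with (S (k + m)) by lia. replace (k + S m)%nat with (S (k + m)) by lia.
    rewrite Hhh.
    replace (RtoC (INR (S (k + m))) + x) with ((RtoC (INR k) + x) + RtoC (INR (S m)))
      by (rewrite <- Nat.add_succ_r, RtoC_INR_plus; ring).
    apply beta_nat_harmonic_diff, avoids_nonpos_int_INR_add, Hx.
Qed.

End BernsteinBeta.

Theorem bernstein_beta_identities n l1 u1 l2 u2 (f g : nat -> C) (Hu1 : (u1 <= n)%nat)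
  (Hid : forall t : C,
      sum_n_m (fun k => f k * pow_n t k * pow_n (1 - t) (n - k)) l1 u1
      = sum_n_m (fun k => g k * pow_n t k) l2 u2)
  (x : C) (Hx : avoids_nonpos_int x)
  (hh : nat -> C) (Hhh : forall j, hh (S j) = hh j + / (RtoC (INR (S j)) + x)) :
  sum_n_m (fun k => f k * beta_nat (n - k) (RtoC (INR k) + x)) l1 u1
    = sum_n_m (fun k => g k / (RtoC (INR k) + x)) l2 u2 /\
  sum_n_m (fun k => f k * ((hh n - Hnat (n - k)) * beta_nat (n - k) (RtoC (INR k) + x))) l1 u1
    = sum_n_m (fun k => g k * (hh k / (RtoC (INR k) + x))) l2 u2.
Proof.
  split.
  - etransitivity;
      [| exact (bernstein_transfer n l1 u1 l2 u2 f g Hu1 Hid (fun j => / (RtoC (INR j) + x)))].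
    apply sum_n_m_ext_loc. intros k Hk. now rewrite coef_pair_bern_inv by (auto; lia).
  - rewrite <- (bernstein_transfer n l1 u1 l2 u2 f g Hu1 Hid).
    apply sum_n_m_ext_loc. intros k Hk.
    rewrite (coef_pair_bern_harmonic x Hx hh Hhh) by lia.
    now replace (k + (n - k))%nat with n by lia.
Qed.

(** * Limits of complex sequences *)

Definition is_Clim_seq (u : nat -> C) (l : C) : Prop :=
  forall eps : R, (0 < eps)%R -> exists N : nat, forall m, (N <= m)%nat -> (Cmod (u m - l) < eps)%R.

Definition Ccauchy_seq (u : nat -> C) : Prop :=
  forall eps : R, (0 < eps)%R ->
  exists N : nat, forall p q, (N <= p)%nat -> (N <= q)%nat -> (Cmod (u p - u q) < eps)%R.

Lemma Cmod_minus_triangle (a b c : C) : (Cmod (a - c) <= Cmod (a - b) + Cmod (b - c))%R.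
Proof. replace (a - c) with ((a - b) + (b - c)) by ring. apply Cmod_triangle. Qed.

Lemma Cmod_minus_sym (a b : C) : Cmod (a - b) = Cmod (b - a).
Proof. replace (a - b) with (- (b - a)) by ring. apply Cmod_opp. Qed.

Lemma INR_unbounded_ge (r : R) (J : nat) : exists N : nat, (J <= N)%nat /\ (r < INR N)%R.
Proof.
  destruct (INR_unbounded r) as [N HN]. exists (N + J)%nat. split; [lia|].
  rewrite plus_INR. pose proof (pos_INR J). lra.
Qed.

Lemma is_Clim_seq_Ccauchy u l : is_Clim_seq u l -> Ccauchy_seq u.
Proof.
  intros H eps Heps. destruct (H (eps / 2)%R ltac:(lra)) as [N HN]. exists N. intros p q Hp Hq.
  eapply Rle_lt_trans; [apply (Cmod_minus_triangle _ l)|]. rewrite (Cmod_minus_sym l).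
  pose proof (HN p Hp). pose proof (HN q Hq). lra.
Qed.

Lemma is_Clim_seq_unique u l l' : is_Clim_seq u l -> is_Clim_seq u l' -> l = l'.
Proof.
  intros H1 H2. apply Ceq_minus, Cmod_eq_0.
  destruct (Req_dec (Cmod (l - l')) 0) as [E|E]; [exact E|exfalso].
  assert (Hp : (0 < Cmod (l - l') / 2)%R) by (pose proof (Cmod_ge_0 (l - l')); lra).
  destruct (H1 _ Hp) as [N1 HN1]. destruct (H2 _ Hp) as [N2 HN2].
  specialize (HN1 (N1 + N2)%nat ltac:(lia)). specialize (HN2 (N1 + N2)%nat ltac:(lia)).
  assert (T := Cmod_minus_triangle l (u (N1 + N2)%nat) l').
  rewrite (Cmod_minus_sym l (u _)) in T. lra.
Qed.

(* [Clim] is Coquelicot's [lim] for the product uniform structure on [C], whose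
   balls are within a factor [sqrt 2] of the [Cmod]-balls. *)
Lemma Ccauchy_seq_Clim u : Ccauchy_seq u -> is_Clim_seq u (Clim u).
Proof.
  intros H.
  set (T := CompleteNormedModule.CompleteSpace _ C_CompleteNormedModule).
  set (F := filtermap u eventually).
  assert (PF : ProperFilter F) by apply filtermap_proper_filter, eventually_filter.
  assert (CF : cauchy (T := T) F).
  { intros eps. destruct (H eps (cond_pos eps)) as [N HN]. exists (u N). exists N.
    intros n Hn. apply (norm_compat1 (V := C_NormedModule)).
    change (Cmod (u n - u N) < eps)%R. apply HN; lia. }
  intros eps Heps.
  destruct (complete_cauchy (T := T) F PF CF (mkposreal (eps / 2) ltac:(lra))) as [N HN].
  exists N. intros m Hm.
  assert (Hn := norm_compat2 (V := C_NormedModule) _ _ _ (HN m Hm)).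
  change (Cmod (u m - Clim u) < sqrt 2 * (eps / 2))%R in Hn.
  assert (sqrt 2 <= 2)%R.
  { rewrite <- (sqrt_square 2) at 2 by lra. apply sqrt_le_1_alt. lra. }
  nra.
Qed.

Lemma is_Clim_seq_Clim u l : is_Clim_seq u l -> Clim u = l.
Proof.
  intros H. apply (is_Clim_seq_unique u); [|exact H].
  now apply Ccauchy_seq_Clim, (is_Clim_seq_Ccauchy u l).
Qed.

Lemma is_Clim_seq_ext_eventually u v l J :
  (forall m, (J <= m)%nat -> u m = v m) -> is_Clim_seq v l -> is_Clim_seq u l.
Proof.
  intros He H eps Heps. destruct (H eps Heps) as [N HN]. exists (N + J)%nat. intros m Hm.
  rewrite He by lia. apply HN. lia.
Qed.

Lemma is_Clim_seq_const c : is_Clim_seq (fun _ => c) c.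
Proof.
  intros eps Heps. exists 0%nat. intros. replace (c - c) with (RtoC 0) by ring.
  rewrite Cmod_0. lra.
Qed.

Lemma is_Clim_seq_plus u v a b :
  is_Clim_seq u a -> is_Clim_seq v b -> is_Clim_seq (fun m => u m + v m) (a + b).
Proof.
  intros H1 H2 eps Heps.
  destruct (H1 (eps / 2)%R ltac:(lra)) as [N1 HN1]. destruct (H2 (eps / 2)%R ltac:(lra)) as [N2 HN2].
  exists (N1 + N2)%nat. intros m Hm.
  replace (u m + v m - (a + b)) with ((u m - a) + (v m - b)) by ring.
  eapply Rle_lt_trans; [apply Cmod_triangle|].
  pose proof (HN1 m ltac:(lia)). pose proof (HN2 m ltac:(lia)). lra.
Qed.

Lemma is_Clim_seq_mult u v a b :
  is_Clim_seq u a -> is_Clim_seq v b -> is_Clim_seq (fun m => u m * v m) (a * b).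
Proof.
  intros H1 H2 eps Heps.
  set (A := (Cmod a + 1)%R). set (B := (Cmod b + 1)%R).
  assert (HA : (0 < A)%R) by (unfold A; pose proof (Cmod_ge_0 a); lra).
  assert (HB : (0 < B)%R) by (unfold B; pose proof (Cmod_ge_0 b); lra).
  set (d := Rmin 1 (eps / (A + B))).
  assert (Hd : (0 < d)%R) by (apply Rmin_glb_lt; [lra | apply Rdiv_lt_0_compat; lra]).
  assert (Hd1 : (d <= 1)%R) by apply Rmin_l.
  assert (Hd2 : (d * (A + B) <= eps)%R).
  { assert (d <= eps / (A + B))%R by apply Rmin_r.
    apply Rmult_le_reg_r with (/ (A + B))%R; [apply Rinv_0_lt_compat; lra|].
    rewrite Rmult_assoc, Rinv_r by lra. lra. }
  destruct (H1 d Hd) as [N1 HN1]. destruct (H2 d Hd) as [N2 HN2].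
  exists (N1 + N2)%nat. intros m Hm.
  pose proof (HN1 m ltac:(lia)) as E1. pose proof (HN2 m ltac:(lia)) as E2.
  replace (u m * v m - a * b) with (u m * (v m - b) + b * (u m - a)) by ring.
  eapply Rle_lt_trans; [apply Cmod_triangle|]. rewrite !Cmod_mult.
  assert (Hu : (Cmod (u m) <= A)%R).
  { unfold A. replace (u m) with ((u m - a) + a) by ring.
    eapply Rle_trans; [apply Cmod_triangle | lra]. }
  pose proof (Cmod_ge_0 (u m)). pose proof (Cmod_ge_0 b).
  pose proof (Cmod_ge_0 (v m - b)). pose proof (Cmod_ge_0 (u m - a)).
  apply Rlt_le_trans with (A * d + B * d)%R; [|lra].
  apply Rplus_le_lt_compat; [apply Rmult_le_compat; lra|].
  apply Rle_lt_trans with (Cmod b * d)%R; [apply Rmult_le_compat_l; lra | unfold B; lra].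
Qed.

Lemma is_Clim_seq_minus u v a b :
  is_Clim_seq u a -> is_Clim_seq v b -> is_Clim_seq (fun m => u m - v m) (a - b).
Proof.
  intros H1 H2.
  assert (H := is_Clim_seq_plus _ _ _ _ H1 (is_Clim_seq_mult _ _ _ _ (is_Clim_seq_const (- (1))) H2)).
  intros eps Heps. destruct (H eps Heps) as [N HN]. exists N. intros m Hm.
  replace (u m - v m - (a - b)) with (u m + - (1) * v m - (a + - (1) * b)) by ring.
  exact (HN m Hm).
Qed.

Lemma Cmod_INR_plus_ge (m : nat) (w : C) : (INR m - Cmod w <= Cmod (RtoC (INR m) + w))%R.
Proof.
  pose proof (Cmod_triangle (RtoC (INR m) + w) (- w)) as H. rewrite Cmod_opp in H.
  replace (RtoC (INR m) + w + - w) with (RtoC (INR m)) in H by ring.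
  rewrite Cmod_R, Rabs_pos_eq in H by apply pos_INR. lra.
Qed.

Lemma is_Clim_seq_div_INR c w : is_Clim_seq (fun m => c / (RtoC (INR m) + w)) 0.
Proof.
  intros eps Heps. destruct (INR_unbounded (Cmod w + Cmod c / eps + 1)) as [N HN].
  exists N. intros m Hm.
  assert (HmN : (INR N <= INR m)%R) by now apply le_INR.
  pose proof (Cmod_INR_plus_ge m w) as Hl.
  assert (Hc : (0 <= Cmod c / eps)%R) by (apply Rdiv_le_0_compat; [apply Cmod_ge_0 | lra]).
  assert (Hnz : RtoC (INR m) + w <> 0) by (apply Cmod_gt_0; lra).
  replace (c / (RtoC (INR m) + w) - 0) with (c / (RtoC (INR m) + w)) by ring.
  rewrite Cmod_div by exact Hnz.
  apply Rmult_lt_reg_r with (Cmod (RtoC (INR m) + w)); [lra|].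
  unfold Rdiv. rewrite Rmult_assoc, Rinv_l, Rmult_1_r by lra.
  assert (Cmod c = eps * (Cmod c / eps))%R by (field; lra). nra.
Qed.

Lemma is_Clim_seq_INR_ratio c : avoids_nonpos_int c ->
  is_Clim_seq (fun m => RtoC (INR m) / (RtoC (INR m) + c)) 1.
Proof.
  intros Hc. apply (is_Clim_seq_ext_eventually _ (fun m => 1 - c / (RtoC (INR m) + c)) _ 0).
  - intros m _. field. rewrite Cplus_comm. apply Hc.
  - assert (H := is_Clim_seq_minus _ _ _ _ (is_Clim_seq_const 1) (is_Clim_seq_div_INR c c)).
    now replace (1 - 0) with (RtoC 1) in H by ring.
Qed.

Lemma Cmod_plus_ge (a b : C) : (Cmod a - Cmod b <= Cmod (a + b))%R.
Proof.
  pose proof (Cmod_triangle (a + b) (- b)) as H. rewrite Cmod_opp in H.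
  replace (a + b + - b) with a in H by ring. lra.
Qed.

Lemma Rdiv_INR_telescope (K : R) (q : nat) : (1 <= q)%nat ->
  (K / (INR q * INR (S q)) = K / INR q - K / INR (S q))%R.
Proof.
  intros Hq. assert (0 < INR q)%R by (apply lt_0_INR; lia).
  rewrite S_INR. field. lra.
Qed.

Section SummableIncrements.

Variable J : nat.
Hypothesis HJ : (1 <= J)%nat.

Lemma increments_tail_bound (u e : nat -> C) (K : R) :
  (forall m, (J <= m)%nat -> u (S m) = u m + e m) ->
  (forall m, (J <= m)%nat -> (Cmod (e m) <= K / (INR m * INR (S m)))%R) ->
  forall p d, (J <= p)%nat -> (Cmod (u (p + d)%nat - u p) <= K / INR p - K / INR (p + d))%R.
Proof.
  intros Hu He p d Hp. induction d as [|d IH].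
  - rewrite Nat.add_0_r. replace (u p - u p) with (RtoC 0) by ring. rewrite Cmod_0. lra.
  - rewrite <- plus_n_Sm, Hu by lia.
    replace (u (p + d)%nat + e (p + d)%nat - u p) with ((u (p + d)%nat - u p) + e (p + d)%nat) by ring.
    eapply Rle_trans; [apply Cmod_triangle|].
    pose proof (He (p + d)%nat ltac:(lia)). rewrite Rdiv_INR_telescope in * by lia. lra.
Qed.

Lemma Ccauchy_of_increments (u e : nat -> C) (K : R) : (0 <= K)%R ->
  (forall m, (J <= m)%nat -> u (S m) = u m + e m) ->
  (forall m, (J <= m)%nat -> (Cmod (e m) <= K / (INR m * INR (S m)))%R) ->
  Ccauchy_seq u.
Proof.
  intros HK Hu He eps Heps.
  destruct (INR_unbounded_ge (2 * K / eps) J) as [N [HNJ HN]].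
  assert (HN0 : (0 < INR N)%R) by (apply lt_0_INR; lia).
  assert (Hsmall : (2 * (K / INR N) < eps)%R).
  { apply Rmult_lt_reg_r with (INR N); [lra|]. unfold Rdiv.
    rewrite Rmult_assoc, (Rmult_assoc K), Rinv_l by lra.
    assert (2 * K = eps * (2 * K / eps))%R by (field; lra). nra. }
  assert (Htail : forall r, (N <= r)%nat -> (Cmod (u r - u N) <= K / INR N)%R).
  { intros r Hr. replace r with (N + (r - N))%nat by lia.
    eapply Rle_trans; [apply (increments_tail_bound u e K Hu He N (r - N) HNJ)|].
    assert (0 <= K / INR (N + (r - N)))%R by (apply Rdiv_le_0_compat; [lra | apply lt_0_INR; lia]).
    lra. }
  exists N. intros p q Hp Hq.
  eapply Rle_lt_trans; [apply (Cmod_minus_triangle _ (u N))|]. rewrite (Cmod_minus_sym (u N)).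
  pose proof (Htail p Hp). pose proof (Htail q Hq). lra.
Qed.

Variables (P e : nat -> C) (K : R).
Hypothesis HK : (0 <= K)%R.
Hypothesis HP : forall m, (J <= m)%nat -> P (S m) = P m * (1 + e m).
Hypothesis He : forall m, (J <= m)%nat -> (Cmod (e m) <= K / (INR m * INR (S m)))%R.

Lemma prod_bound m : (J <= m)%nat -> (Cmod (P m) <= Cmod (P J) * exp (K / INR J))%R.
Proof.
  assert (Hd : forall d, (Cmod (P (J + d)%nat) <= Cmod (P J) * exp (K / INR J - K / INR (J + d)))%R).
  { induction d as [|d IH].
    - rewrite Nat.add_0_r, Rminus_diag, exp_0. lra.
    - rewrite <- plus_n_Sm, HP, Cmod_mult by lia.
      assert (Hq := He (J + d)%nat ltac:(lia)).
      assert (H1 : (Cmod (1 + e (J + d)%nat) <= exp (K / (INR (J + d) * INR (S (J + d)))))%R).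
      { eapply Rle_trans; [apply Cmod_triangle|]. rewrite Cmod_1.
        eapply Rle_trans; [|apply exp_ineq1_le]. lra. }
      rewrite Rdiv_INR_telescope in H1 by lia.
      replace (K / INR J - K / INR (S (J + d)))%R
        with ((K / INR J - K / INR (J + d)) + (K / INR (J + d) - K / INR (S (J + d))))%R by ring.
      rewrite exp_plus, <- Rmult_assoc.
      apply Rmult_le_compat; try apply Cmod_ge_0; assumption. }
  intros Hm. replace m with (J + (m - J))%nat by lia.
  eapply Rle_trans; [apply Hd|]. apply Rmult_le_compat_l; [apply Cmod_ge_0|].
  assert (0 <= K / INR (J + (m - J)))%R by (apply Rdiv_le_0_compat; [lra | apply lt_0_INR; lia]).
  destruct (Req_dec (K / INR (J + (m - J))) 0) as [Z|Z].
  - rewrite Z, Rminus_0_r. lra.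
  - left. apply exp_increasing. lra.
Qed.

Lemma prod_Ccauchy : Ccauchy_seq P.
Proof.
  set (M := (Cmod (P J) * exp (K / INR J))%R).
  assert (HM : (0 <= M)%R) by (pose proof (Cmod_ge_0 (P J)); pose proof (exp_pos (K / INR J)); unfold M; nra).
  apply (Ccauchy_of_increments P (fun m => P m * e m) (M * K)); [nra | |].
  - intros m Hm. rewrite HP by exact Hm. ring.
  - intros m Hm. rewrite Cmod_mult. unfold Rdiv. rewrite Rmult_assoc.
    apply Rmult_le_compat; try apply Cmod_ge_0; [apply prod_bound, Hm | apply He, Hm].
Qed.

End SummableIncrements.

Lemma Cinv_1_plus_sub1_bound (e : C) : (Cmod e <= 1 / 2)%R ->
  1 + e <> 0 /\ (Cmod (/ (1 + e) - 1) <= 2 * Cmod e)%R.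
Proof.
  intros He. pose proof (Cmod_plus_ge 1 e) as H. rewrite Cmod_1 in H.
  assert (H0 : 1 + e <> 0) by (apply Cmod_gt_0; lra).
  split; [exact H0|].
  replace (/ (1 + e) - 1) with (- e / (1 + e)) by (field; exact H0).
  rewrite Cmod_div, Cmod_opp by exact H0.
  apply Rmult_le_reg_r with (Cmod (1 + e)); [lra|].
  unfold Rdiv. rewrite Rmult_assoc, Rinv_l, Rmult_1_r by lra.
  pose proof (Cmod_ge_0 e). nra.
Qed.

Lemma prod_lower_bound (P e : nat -> C) (K : R) (J : nat) : (1 <= J)%nat -> (0 <= K)%R ->
  (forall m, (J <= m)%nat -> P (S m) = P m * (1 + e m)) ->
  (forall m, (J <= m)%nat -> (Cmod (e m) <= K / (INR m * INR (S m)))%R) ->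
  (forall m, (J <= m)%nat -> P m <> 0) ->
  exists (c : R) (J' : nat), (0 < c)%R /\ forall m, (J' <= m)%nat -> (c <= Cmod (P m))%R.
Proof.
  intros HJ HK HP He Hnz.
  destruct (INR_unbounded_ge (2 * K) J) as [J' [HJJ' HJ'K]].
  assert (He2 : forall m, (J' <= m)%nat -> (Cmod (e m) <= 1 / 2)%R).
  { intros m Hm. eapply Rle_trans; [apply He; lia|].
    assert (INR J' <= INR m)%R by now apply le_INR.
    assert (1 <= INR (S m))%R by (apply (le_INR 1); lia).
    apply Rmult_le_reg_r with (INR m * INR (S m))%R; [nra|].
    unfold Rdiv. rewrite Rmult_assoc, Rinv_l by nra. nra. }
  (* The reciprocals satisfy a recursion of the same kind, so they stay bounded. *)
  set (Q m := / P m). set (e' m := / (1 + e m) - 1).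
  assert (HQ : forall m, (J' <= m)%nat -> Q (S m) = Q m * (1 + e' m)).
  { intros m Hm. unfold Q, e'. rewrite HP by lia.
    field. split; [apply (Cinv_1_plus_sub1_bound _ (He2 m Hm)) | apply Hnz; lia]. }
  assert (He' : forall m, (J' <= m)%nat -> (Cmod (e' m) <= 2 * K / (INR m * INR (S m)))%R).
  { intros m Hm. eapply Rle_trans; [apply (Cinv_1_plus_sub1_bound _ (He2 m Hm))|].
    replace (2 * K / (INR m * INR (S m)))%R with (2 * (K / (INR m * INR (S m))))%R
      by (unfold Rdiv; ring).
    pose proof (He m ltac:(lia)). lra. }
  assert (HPpos : forall m, (J' <= m)%nat -> (0 < Cmod (P m))%R).
  { intros m Hm. apply Cmod_gt_0, Hnz. lia. }
  exists (/ (Cmod (Q J') * exp (2 * K / INR J')))%R, J'. split.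
  - apply Rinv_0_lt_compat, Rmult_lt_0_compat; [|apply exp_pos].
    unfold Q. rewrite Cmod_inv by (apply Hnz; lia). apply Rinv_0_lt_compat, HPpos. lia.
  - intros m Hm. assert (HB := prod_bound J' ltac:(lia) Q e' (2 * K) ltac:(lra) HQ He' m Hm).
    unfold Q in HB. rewrite Cmod_inv in HB by (apply Hnz; lia).
    rewrite <- (Rinv_inv (Cmod (P m))).
    apply Rinv_le_contravar; [apply Rinv_0_lt_compat, HPpos, Hm | exact HB].
Qed.

Lemma prod_Clim_neq0 (P e : nat -> C) (K : R) (J : nat) : (1 <= J)%nat -> (0 <= K)%R ->
  (forall m, (J <= m)%nat -> P (S m) = P m * (1 + e m)) ->
  (forall m, (J <= m)%nat -> (Cmod (e m) <= K / (INR m * INR (S m)))%R) ->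
  (forall m, (J <= m)%nat -> P m <> 0) ->
  Clim P <> 0.
Proof.
  intros HJ HK HP He Hnz HL.
  destruct (prod_lower_bound P e K J HJ HK HP He Hnz) as [c [J' [Hc Hlow]]].
  assert (Hlim := Ccauchy_seq_Clim P (prod_Ccauchy J HJ P e K HK HP He)). rewrite HL in Hlim.
  destruct (Hlim c Hc) as [N HN]. specialize (HN (N + J')%nat ltac:(lia)).
  replace (P (N + J')%nat - 0) with (P (N + J')%nat) in HN by ring.
  pose proof (Hlow (N + J')%nat ltac:(lia)). lra.
Qed.

(** * Gauss's limit for the Gamma function *)

Lemma im_le_Cmod (c : C) : (Rabs (Im c) <= Cmod c)%R.
Proof. exact (Rle_trans _ _ _ (Rmax_r _ _) (Rmax_Cmod c)). Qed.

Lemma Cmod_le_Rabs_sum (z : C) : (Cmod z <= Rabs (fst z) + Rabs (snd z))%R.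
Proof.
  pose proof (Rabs_pos (fst z)). pose proof (Rabs_pos (snd z)).
  unfold Cmod. rewrite <- (sqrt_pow2 (Rabs (fst z) + Rabs (snd z))) by lra.
  apply sqrt_le_1_alt. rewrite <- (pow2_abs (fst z)), <- (pow2_abs (snd z)). nra.
Qed.

Lemma exp_le_inv_1_minus (x : R) : (x < 1)%R -> (exp x <= 1 / (1 - x))%R.
Proof.
  intros H. pose proof (exp_ineq1_le (- x)). pose proof (exp_pos x).
  assert (exp x * exp (- x) = 1)%R by (rewrite <- exp_plus, Rplus_opp_r; apply exp_0).
  apply Rmult_le_reg_r with (1 - x)%R; [lra|].
  unfold Rdiv. rewrite Rmult_1_l, Rinv_l by lra. nra.
Qed.

Lemma exp_second_order (a : R) : (Rabs a <= 1 / 2)%R -> (0 <= exp a - 1 - a <= 2 * a ^ 2)%R.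
Proof.
  intros Ha. apply Rabs_le_between in Ha.
  pose proof (exp_ineq1_le a). pose proof (exp_le_inv_1_minus a ltac:(lra)).
  assert (1 / (1 - a) <= 1 + a + 2 * a ^ 2)%R.
  { apply Rmult_le_reg_r with (1 - a)%R; [lra|].
    unfold Rdiv. rewrite Rmult_1_l, Rinv_l by lra. nra. }
  lra.
Qed.

Lemma cos_second_order (b : R) : (Rabs b <= 1 / 2)%R -> (Rabs (cos b - 1) <= b ^ 2 / 2)%R.
Proof.
  intros Hb. apply Rabs_le_between in Hb.
  destruct (pre_cos_bound b 0 ltac:(lra) ltac:(lra)) as [H _].
  replace (cos_approx b (2 * 0 + 1)) with (1 - b ^ 2 / 2)%R in H
    by (unfold cos_approx, cos_term; simpl; field).
  pose proof (COS_bound b). apply Rabs_le_between. lra.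
Qed.

Lemma sin_second_order_nonneg (b : R) : (0 <= b <= 1 / 2)%R -> (Rabs (sin b - b) <= b ^ 2 / 12)%R.
Proof.
  intros Hb. destruct (pre_sin_bound b 0 ltac:(lra) ltac:(lra)) as [H1 H2].
  replace (sin_approx b (2 * 0 + 1)) with (b - b ^ 3 / 6)%R in H1
    by (unfold sin_approx, sin_term; simpl; field).
  replace (sin_approx b (2 * (0 + 1))) with (b - b ^ 3 / 6 + b ^ 5 / 120)%R in H2
    by (unfold sin_approx, sin_term; simpl; field).
  apply Rabs_le_between.
  assert (b ^ 3 <= b ^ 2 / 2)%R by nra. assert (b ^ 5 <= b ^ 3)%R by nra. assert (0 <= b ^ 3)%R by nra.
  lra.
Qed.

Lemma sin_second_order (b : R) : (Rabs b <= 1 / 2)%R -> (Rabs (sin b - b) <= b ^ 2 / 12)%R.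
Proof.
  intros Hb. apply Rabs_le_between in Hb. destruct (Rle_or_lt 0 b) as [H|H].
  - apply sin_second_order_nonneg. lra.
  - replace (sin b - b)%R with (- (sin (- b) - (- b)))%R by (rewrite sin_neg; ring).
    rewrite Rabs_Ropp. replace (b ^ 2)%R with ((- b) ^ 2)%R by ring.
    apply sin_second_order_nonneg. lra.
Qed.

(* The pair [(exp a cos b, exp a sin b)] is [exp (a + i b)]. *)
Lemma Cexp_second_order (a b : R) : (Rabs a <= 1 / 2)%R -> (Rabs b <= 1 / 2)%R ->
  (Cmod ((exp a * cos b, exp a * sin b)%R - 1 - (a, b)) <= 4 * (a ^ 2 + b ^ 2))%R.
Proof.
  intros Ha Hb. set (z := (exp a * cos b, exp a * sin b)%R - 1 - (a, b)).
  assert (Hf : fst z = ((exp a - 1 - a) + exp a * (cos b - 1))%R) by (unfold z; simpl; ring).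
  assert (Hs : snd z = ((exp a - 1) * sin b + (sin b - b))%R) by (unfold z; simpl; ring).
  eapply Rle_trans; [apply Cmod_le_Rabs_sum|]. rewrite Hf, Hs.
  pose proof (exp_second_order a Ha) as Ea. pose proof (cos_second_order b Hb) as Cb.
  pose proof (sin_second_order b Hb) as Sb. pose proof (exp_pos a).
  assert (Ea1 : (Rabs (exp a - 1) <= 2 * Rabs a)%R).
  { apply Rabs_le_between in Ha. apply Rabs_le_between.
    destruct (Rle_or_lt 0 a); [rewrite Rabs_pos_eq by lra | rewrite Rabs_left by lra]; nra. }
  assert (Ea2 : (exp a <= 2)%R) by (apply Rabs_le_between in Ha; nra).
  assert (Sb1 : (Rabs (sin b) <= 2 * Rabs b)%R).
  { replace (sin b) with ((sin b - b) + b)%R by ring. eapply Rle_trans; [apply Rabs_triang|].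
    assert (b ^ 2 / 12 <= Rabs b)%R by (rewrite <- (pow2_abs b); pose proof (Rabs_pos b); nra).
    lra. }
  eapply Rle_trans; [apply Rplus_le_compat; apply Rabs_triang|].
  rewrite !Rabs_mult, (Rabs_pos_eq (exp a)), (Rabs_pos_eq (exp a - 1 - a)) by lra.
  pose proof (Rabs_pos (cos b - 1)). pose proof (Rabs_pos (exp a - 1)).
  pose proof (Rabs_pos (sin b)). pose proof (Rabs_pos a). pose proof (Rabs_pos b).
  assert (exp a * Rabs (cos b - 1) <= 2 * (b ^ 2 / 2))%R by (apply Rmult_le_compat; lra).
  assert (Rabs (exp a - 1) * Rabs (sin b) <= (2 * Rabs a) * (2 * Rabs b))%R
    by (apply Rmult_le_compat; lra).
  assert (4 * Rabs a * Rabs b <= 2 * a ^ 2 + 2 * b ^ 2)%R.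
  { rewrite <- (pow2_abs a), <- (pow2_abs b). pose proof (pow2_ge_0 (Rabs a - Rabs b)). nra. }
  lra.
Qed.

Lemma Rcpow_second_order (a : R) (w : C) :
  (Rabs (Re w * ln a) <= 1 / 2)%R -> (Rabs (Im w * ln a) <= 1 / 2)%R ->
  (Cmod (Rcpow a w - 1 - w * RtoC (ln a)) <= 4 * (Cmod w ^ 2 * ln a ^ 2))%R.
Proof.
  intros Hre Him.
  replace (w * RtoC (ln a)) with ((Re w * ln a, Im w * ln a)%R : C)
    by (destruct w; unfold Cmult, RtoC; simpl; f_equal; ring).
  replace (Cmod w ^ 2 * ln a ^ 2)%R with ((Re w * ln a) ^ 2 + (Im w * ln a) ^ 2)%R
    by (rewrite Cmod2_alt; ring).
  exact (Cexp_second_order _ _ Hre Him).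
Qed.

Lemma Rcpow_add1 (a : R) (w : C) : (0 < a)%R -> Rcpow a (w + 1) = RtoC a * Rcpow a w.
Proof.
  intros Ha. unfold Rcpow. destruct w as [w1 w2]. unfold RtoC, Cmult, Cplus. simpl.
  replace ((w1 + 1) * ln a)%R with (w1 * ln a + ln a)%R by ring.
  replace ((w2 + 0) * ln a)%R with (w2 * ln a)%R by ring.
  rewrite exp_plus, exp_ln by exact Ha. f_equal; ring.
Qed.

Lemma Rcpow_1 (a : R) : (0 < a)%R -> Rcpow a 1 = RtoC a.
Proof.
  intros Ha. unfold Rcpow, RtoC. simpl.
  rewrite Rmult_1_l, Rmult_0_l, exp_ln, cos_0, sin_0 by exact Ha. f_equal; ring.
Qed.

Lemma Rcpow_mult (a b : R) (w : C) : (0 < a)%R -> (0 < b)%R ->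
  Rcpow (a * b) w = Rcpow a w * Rcpow b w.
Proof.
  intros Ha Hb. unfold Rcpow. destruct w as [w1 w2]. unfold Cmult. simpl.
  rewrite ln_mult by assumption.
  rewrite !Rmult_plus_distr_l, exp_plus, cos_plus, sin_plus. f_equal; ring.
Qed.

Lemma Rcpow_neq0 (a : R) (w : C) : Rcpow a w <> 0.
Proof.
  unfold Rcpow. intros E. pose proof (exp_pos (Re w * ln a)) as Hexp.
  pose proof (sin2_cos2 (Im w * ln a)) as Hpyth. unfold Rsqr in Hpyth.
  assert (E1 := f_equal (@fst R R) E). assert (E2 := f_equal (@snd R R) E). simpl in E1, E2.
  assert (Hc : cos (Im w * ln a) = 0%R) by (apply (Rmult_eq_reg_l (exp (Re w * ln a))); lra).
  assert (Hs : sin (Im w * ln a) = 0%R) by (apply (Rmult_eq_reg_l (exp (Re w * ln a))); lra).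
  rewrite Hc, Hs in Hpyth. lra.
Qed.

Lemma ln_succ_ratio_bounds (x : R) : (1 <= x)%R ->
  (1 / (x + 1) <= ln ((x + 1) / x) <= 1 / x)%R.
Proof.
  intros Hx. split.
  - assert (E : (ln ((x + 1) / x) = - ln (x / (x + 1)))%R).
    { rewrite <- ln_Rinv by (apply Rdiv_lt_0_compat; lra). f_equal. field. lra. }
    assert (ln (x / (x + 1)) <= - (1 / (x + 1)))%R.
    { rewrite <- (ln_exp (- (1 / (x + 1)))). apply ln_le; [apply Rdiv_lt_0_compat; lra|].
      pose proof (exp_ineq1_le (- (1 / (x + 1)))).
      replace (x / (x + 1))%R with (1 + - (1 / (x + 1)))%R by (field; lra). lra. }
    lra.
  - rewrite <- (ln_exp (1 / x)). apply ln_le; [apply Rdiv_lt_0_compat; lra|].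
    pose proof (exp_ineq1_le (1 / x)).
    replace ((x + 1) / x)%R with (1 + 1 / x)%R by (field; lra). lra.
Qed.

(* Numerator of the ratio error [gamma_ratio_err] below, after the first-order
   terms of [Rcpow] cancel against [w + x + 1]. *)
Lemma gamma_ratio_num_bound (x : R) (w : C) : (1 <= x)%R -> (2 * Cmod w <= x)%R ->
  (Cmod (RtoC (x + 1) * (Rcpow ((x + 1) / x) w - 1 - w * RtoC (ln ((x + 1) / x)))
         + RtoC ((x + 1) * ln ((x + 1) / x) - 1) * w)
   <= (8 * Cmod w ^ 2 + Cmod w) / x)%R.
Proof.
  intros Hx Hw. set (W := Cmod w) in *. set (l := ln ((x + 1) / x)).
  assert (HW : (0 <= W)%R) by apply Cmod_ge_0.
  destruct (ln_succ_ratio_bounds x Hx) as [Hl1 Hl2]. fold l in Hl1, Hl2.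
  assert (Hx1 : (0 < 1 / (x + 1))%R) by (apply Rdiv_lt_0_compat; lra).
  assert (Hinv : (1 / x * x = 1)%R) by (field; lra).
  assert (HWl : (W * l <= 1 / 2)%R).
  { apply Rle_trans with (W * (1 / x))%R; [apply Rmult_le_compat_l; lra|]. nra. }
  assert (Hre : (Rabs (Re w * l) <= 1 / 2)%R).
  { rewrite Rabs_mult, (Rabs_pos_eq l) by lra. pose proof (re_le_Cmod w) as Hr. fold W in Hr.
    apply Rle_trans with (W * l)%R; [apply Rmult_le_compat_r; lra | exact HWl]. }
  assert (Him : (Rabs (Im w * l) <= 1 / 2)%R).
  { rewrite Rabs_mult, (Rabs_pos_eq l) by lra. pose proof (im_le_Cmod w) as Hi. fold W in Hi.
    apply Rle_trans with (W * l)%R; [apply Rmult_le_compat_r; lra | exact HWl]. }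
  assert (H1 : (0 <= (x + 1) * l - 1 <= 1 / x)%R).
  { split.
    - replace 1%R with ((x + 1) * (1 / (x + 1)))%R at 2 by (field; lra).
      assert ((x + 1) * (1 / (x + 1)) <= (x + 1) * l)%R by (apply Rmult_le_compat_l; lra). lra.
    - assert ((x + 1) * l <= (x + 1) * (1 / x))%R by (apply Rmult_le_compat_l; lra).
      replace ((x + 1) * (1 / x))%R with (1 + 1 / x)%R in H by (field; lra). lra. }
  assert (H2 : ((x + 1) * l ^ 2 <= 2 / x)%R).
  { assert (Hl0 : (0 <= l)%R) by lra.
    apply Rle_trans with ((x + 1) * (1 / x) ^ 2)%R.
    - apply Rmult_le_compat_l; [lra|]. apply pow_incr. lra.
    - apply Rmult_le_reg_r with (x ^ 2)%R; [nra|].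
      replace ((x + 1) * (1 / x) ^ 2 * x ^ 2)%R with (x + 1)%R by (field; lra).
      replace (2 / x * x ^ 2)%R with (2 * x)%R by (field; lra). lra. }
  eapply Rle_trans; [apply Cmod_triangle|]. rewrite !Cmod_mult, !Cmod_R.
  rewrite (Rabs_pos_eq (x + 1)), (Rabs_pos_eq ((x + 1) * l - 1)) by lra.
  pose proof (Rcpow_second_order ((x + 1) / x) w Hre Him) as Hq. fold W l in Hq.
  apply Rle_trans with ((x + 1) * (4 * (W ^ 2 * l ^ 2)) + 1 / x * W)%R.
  - apply Rplus_le_compat; [apply Rmult_le_compat_l; lra | apply Rmult_le_compat_r; lra].
  - replace ((8 * W ^ 2 + W) / x)%R with (4 * W ^ 2 * (2 / x) + 1 / x * W)%R by (field; lra).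
    apply Rplus_le_compat_r.
    replace ((x + 1) * (4 * (W ^ 2 * l ^ 2)))%R with (4 * W ^ 2 * ((x + 1) * l ^ 2))%R by ring.
    apply Rmult_le_compat_l; [nra | exact H2].
Qed.

Definition gamma_seq (w : C) (m : nat) : C :=
  RtoC (INR (fact m)) * Rcpow (INR m) w / Cpoch0 w m.

Definition gamma_ratio_err (w : C) (m : nat) : C :=
  RtoC (INR (S m)) * Rcpow (INR (S m) / INR m) w / (w + RtoC (INR (S m))) - 1.

Lemma gamma_seq_S w m : avoids_nonpos_int w -> (1 <= m)%nat ->
  gamma_seq w (S m) = gamma_seq w m * (1 + gamma_ratio_err w m).
Proof.
  intros Hw Hm. assert (Hm0 : (0 < INR m)%R) by (apply lt_0_INR; lia).
  assert (HR : Rcpow (INR (S m)) w = Rcpow (INR m) w * Rcpow (INR (S m) / INR m) w).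
  { rewrite <- Rcpow_mult.
    - f_equal. field. lra.
    - exact Hm0.
    - apply Rdiv_lt_0_compat; [apply lt_0_INR; lia | exact Hm0]. }
  unfold gamma_seq, gamma_ratio_err. rewrite Cpoch0_S, fact_simpl, mult_INR, RtoC_mult, HR.
  field. side_neq0.
Qed.

Lemma gamma_ratio_err_bound w m : (1 <= m)%nat -> (2 * Cmod w <= INR m)%R ->
  (Cmod (gamma_ratio_err w m) <= (16 * Cmod w ^ 2 + 2 * Cmod w) / (INR m * INR (S m)))%R.
Proof.
  intros Hm1 Hm. rewrite S_INR. set (x := INR m) in *. set (W := Cmod w) in *.
  assert (Hx : (1 <= x)%R) by (apply (le_INR 1); lia).
  assert (HW : (0 <= W)%R) by apply Cmod_ge_0.
  assert (Hden : ((x + 1) / 2 <= Cmod (w + RtoC (x + 1)))%R).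
  { rewrite Cplus_comm. pose proof (Cmod_plus_ge (RtoC (x + 1)) w) as H.
    rewrite Cmod_R, Rabs_pos_eq in H by lra. fold W in H. lra. }
  assert (Hd0 : w + RtoC (x + 1) <> 0) by (apply Cmod_gt_0; lra).
  unfold gamma_ratio_err. rewrite S_INR. fold x.
  set (l := ln ((x + 1) / x)).
  replace (RtoC (x + 1) * Rcpow ((x + 1) / x) w / (w + RtoC (x + 1)) - 1)
    with ((RtoC (x + 1) * (Rcpow ((x + 1) / x) w - 1 - w * RtoC l)
           + RtoC ((x + 1) * l - 1) * w) / (w + RtoC (x + 1)))
    by (rewrite RtoC_minus, RtoC_mult; field; exact Hd0).
  rewrite Cmod_div by exact Hd0.
  pose proof (gamma_ratio_num_bound x w Hx Hm) as Hnum. fold W l in Hnum.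
  apply Rmult_le_reg_r with (Cmod (w + RtoC (x + 1))); [lra|].
  unfold Rdiv at 1. rewrite Rmult_assoc, Rinv_l, Rmult_1_r by lra.
  eapply Rle_trans; [exact Hnum|].
  apply Rle_trans with ((16 * W ^ 2 + 2 * W) / (x * (x + 1)) * ((x + 1) / 2))%R.
  - right. field. lra.
  - apply Rmult_le_compat_l; [|exact Hden]. apply Rdiv_le_0_compat; nra.
Qed.

Lemma gamma_seq_neq0 w m : avoids_nonpos_int w -> gamma_seq w m <> 0.
Proof.
  intros Hw. apply Cdiv_neq0; [apply Cmult_neq0; [apply RtoC_fact_neq0 | apply Rcpow_neq0] |].
  now apply Cpoch0_neq0.
Qed.

Lemma gamma_seq_cvg w : avoids_nonpos_int w ->
  is_Clim_seq (gamma_seq w) (CGamma w) /\ CGamma w <> 0.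
Proof.
  intros Hw. destruct (INR_unbounded_ge (2 * Cmod w) 1) as [J [HJ1 HJ]].
  set (K := (16 * Cmod w ^ 2 + 2 * Cmod w)%R).
  assert (HK : (0 <= K)%R) by (pose proof (Cmod_ge_0 w); unfold K; nra).
  assert (HP : forall m, (J <= m)%nat ->
                 gamma_seq w (S m) = gamma_seq w m * (1 + gamma_ratio_err w m))
    by (intros m Hm; apply gamma_seq_S; [exact Hw | lia]).
  assert (He : forall m, (J <= m)%nat -> (Cmod (gamma_ratio_err w m) <= K / (INR m * INR (S m)))%R).
  { intros m Hm. apply gamma_ratio_err_bound; [lia|].
    apply Rlt_le, Rlt_le_trans with (INR J); [exact HJ | now apply le_INR]. }
  split.
  - exact (Ccauchy_seq_Clim _ (prod_Ccauchy J HJ1 _ _ K HK HP He)).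
  - apply (prod_Clim_neq0 _ _ K J HJ1 HK HP He). intros m _. now apply gamma_seq_neq0.
Qed.

Lemma CGamma_add1 w : avoids_nonpos_int w -> CGamma (w + 1) = w * CGamma w.
Proof.
  intros Hw. destruct (gamma_seq_cvg w Hw) as [Hc _].
  assert (Hw1 := avoids_nonpos_int_add1 w Hw).
  apply is_Clim_seq_Clim. rewrite <- (Cmult_1_r (w * CGamma w)).
  apply (is_Clim_seq_ext_eventually _
           (fun m => w * gamma_seq w m * (RtoC (INR m) / (RtoC (INR m) + (w + 1)))) _ 1).
  - intros m Hm. assert (Hm0 : (0 < INR m)%R) by (apply lt_0_INR; lia).
    unfold gamma_seq. rewrite Rcpow_add1 by exact Hm0.
    assert (HP : Cpoch0 (w + 1) m = Cpoch0 w m * (w + RtoC (INR (S m))) / w).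
    { rewrite <- Cpoch0_S, Cpoch0_shift. field. side_neq0. }
    assert (H1 : RtoC (INR m) + (w + 1) = w + RtoC (INR (S m))) by (rewrite RtoC_INR_S; ring).
    rewrite HP, H1. field. side_neq0.
  - apply is_Clim_seq_mult.
    + apply (is_Clim_seq_mult (fun _ => w)); [apply is_Clim_seq_const | exact Hc].
    + now apply is_Clim_seq_INR_ratio.
Qed.

Lemma CGamma_add_INR_S w m : avoids_nonpos_int w ->
  CGamma (w + RtoC (INR (S m))) = Cpoch0 w m * CGamma w.
Proof.
  intros Hw. induction m as [|m IH].
  - simpl INR. now rewrite CGamma_add1.
  - rewrite (RtoC_INR_S (S m)), Cplus_assoc, CGamma_add1, IH, Cpoch0_S
      by now apply avoids_nonpos_int_shift.
    ring.
Qed.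

Lemma fact_mult_Cpoch0 (k m : nat) :
  RtoC (INR (fact k)) * Cpoch0 (RtoC (INR (S k))) m = RtoC (INR (fact (S k + m))).
Proof.
  induction m as [|m IH].
  - rewrite Nat.add_0_r, fact_simpl, mult_INR, RtoC_mult. cbn [Cpoch0]. ring.
  - rewrite Cpoch0_S, Nat.add_succ_r, fact_simpl, mult_INR, RtoC_mult, <- IH.
    rewrite <- RtoC_INR_plus, <- Nat.add_succ_r. ring_C.
Qed.

Lemma CGamma_1 : CGamma 1 = 1.
Proof.
  apply is_Clim_seq_Clim.
  apply (is_Clim_seq_ext_eventually _ (fun m => RtoC (INR m) / (RtoC (INR m) + 1)) _ 1).
  - intros m Hm. assert (Hm0 : (0 < INR m)%R) by (apply lt_0_INR; lia).
    unfold gamma_seq. rewrite Rcpow_1 by exact Hm0.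
    assert (E := fact_mult_Cpoch0 0 m). simpl (fact 0) in E. simpl (INR 1) in E.
    rewrite Nat.add_1_l, fact_simpl, mult_INR, RtoC_mult in E.
    replace (Cpoch0 1 m) with (RtoC (INR (S m)) * RtoC (INR (fact m))) by (rewrite <- E; ring).
    rewrite <- RtoC_INR_S. field. side_neq0.
  - exact (is_Clim_seq_INR_ratio 1 avoids_nonpos_int_1).
Qed.

Lemma CGamma_INR_add1 (d : nat) : CGamma (RtoC (INR d) + 1) = RtoC (INR (fact d)).
Proof.
  destruct d as [|m].
  - simpl. replace (RtoC 0 + 1) with (RtoC 1) by ring. apply CGamma_1.
  - rewrite Cplus_comm, CGamma_add_INR_S, CGamma_1.
    + assert (E := fact_mult_Cpoch0 0 m). simpl (fact 0) in E. simpl (INR 1) in E.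
      rewrite Nat.add_1_l in E. rewrite <- E. ring_C.
    + exact avoids_nonpos_int_1.
Qed.

Lemma Cbinom_beta_nat (y : C) (d : nat) : avoids_nonpos_int y ->
  / (y * Cbinom (y + RtoC (INR d)) y) = beta_nat d y.
Proof.
  intros Hy. unfold Cbinom, beta_nat.
  replace (y + RtoC (INR d) + 1) with (y + RtoC (INR (S d))) by (rewrite RtoC_INR_S; ring).
  replace (y + RtoC (INR d) - y + 1) with (RtoC (INR d) + 1) by ring.
  rewrite CGamma_add_INR_S, CGamma_INR_add1, CGamma_add1 by exact Hy.
  destruct (gamma_seq_cvg y Hy) as [_ HG].
  field. side_neq0.
Qed.

Lemma binomial_beta_nat (n k : nat) : (k <= n)%nat ->
  / (RtoC (INR (k + 1)) * RtoC (Binomial.C (n + 1) (k + 1))) = beta_nat (n - k) (RtoC (INR k) + 1).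
Proof.
  intros Hk. unfold Binomial.C, beta_nat.
  replace (n + 1 - (k + 1))%nat with (n - k)%nat by lia.
  replace (k + 1)%nat with (S k) by lia. rewrite <- RtoC_INR_S.
  assert (Ef := fact_mult_Cpoch0 k (n - k)).
  replace (S k + (n - k))%nat with (n + 1)%nat in Ef by lia.
  assert (Hy : avoids_nonpos_int (RtoC (INR (S k)))).
  { intros j. rewrite <- RtoC_INR_plus, Nat.add_succ_l. apply RtoC_INR_S_neq0. }
  rewrite RtoC_div, RtoC_mult, <- Ef, fact_simpl, mult_INR, RtoC_mult.
  - field. side_neq0.
  - apply Rmult_integral_contrapositive. split; apply INR_fact_neq_0.
Qed.

Lemma Cbinom_INR_beta_nat (n k : nat) (s : C) : (k <= n)%nat -> avoids_nonpos_int s ->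
  / ((RtoC (INR k) + s) * Cbinom (RtoC (INR n) + s) (RtoC (INR k) + s))
  = beta_nat (n - k) (RtoC (INR k) + s).
Proof.
  intros Hk Hs.
  replace (RtoC (INR n) + s) with ((RtoC (INR k) + s) + RtoC (INR (n - k)))
    by (rewrite <- (Nat.sub_add k n Hk) at 2; rewrite (RtoC_INR_plus (n - k) k); ring).
  apply Cbinom_beta_nat. rewrite Cplus_comm. now apply avoids_nonpos_int_shift.
Qed.

(** * Harmonic numbers of complex argument *)

Definition harmonic_partial (z : C) (N : nat) : C :=
  sum_n_m (fun j => / RtoC (INR j) - / (RtoC (INR j) + z)) 1 N.

Lemma harmonic_partial_0 z : harmonic_partial z 0 = 0.
Proof. unfold harmonic_partial. now rewrite sum_n_m_zero by lia. Qed.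

Lemma harmonic_partial_S z N : harmonic_partial z (S N)
  = harmonic_partial z N + (/ RtoC (INR (S N)) - / (RtoC (INR (S N)) + z)).
Proof. unfold harmonic_partial. now rewrite sum_n_Sm by lia. Qed.

Section HarmonicShift.

Variable z : C.
Hypothesis Hz : avoids_nonpos_int (z + 1).

Lemma INR_S_add_neq0 m : RtoC (INR (S m)) + z <> 0.
Proof. replace (RtoC (INR (S m)) + z) with (z + 1 + RtoC (INR m)) by (rewrite RtoC_INR_S; ring). apply Hz. Qed.

Lemma harmonic_partial_Ccauchy : Ccauchy_seq (harmonic_partial z).
Proof.
  destruct (INR_unbounded_ge (2 * Cmod z) 1) as [J [HJ1 HJ]].
  apply (Ccauchy_of_increments J HJ1 _ (fun m => / RtoC (INR (S m)) - / (RtoC (INR (S m)) + z))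
           (2 * Cmod z)); [pose proof (Cmod_ge_0 z); lra | intros; apply harmonic_partial_S |].
  intros m Hm.
  assert (HmJ : (INR J <= INR m)%R) by now apply le_INR.
  assert (Hm1 : (1 <= INR m)%R) by (apply (le_INR 1); lia).
  replace (/ RtoC (INR (S m)) - / (RtoC (INR (S m)) + z))
    with (z / (RtoC (INR (S m)) * (RtoC (INR (S m)) + z)))
    by (field; split; [apply INR_S_add_neq0 | apply RtoC_INR_S_neq0]).
  rewrite Cmod_div, Cmod_mult, Cmod_R, Rabs_pos_eq
    by (apply pos_INR || (apply Cmult_neq0; [apply RtoC_INR_S_neq0 | apply INR_S_add_neq0])).
  pose proof (Cmod_INR_plus_ge (S m) z) as Hl. rewrite S_INR in *.
  set (x := INR m) in *. set (Z := Cmod z) in *. assert (HZ : (0 <= Z)%R) by apply Cmod_ge_0.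
  set (D := Cmod (RtoC (x + 1) + z)) in *.
  apply Rmult_le_reg_r with ((x + 1) * D)%R; [nra|].
  unfold Rdiv. rewrite Rmult_assoc, Rinv_l, Rmult_1_r by nra.
  replace (2 * Z * / (x * (x + 1)) * ((x + 1) * D))%R with (2 * Z * (D / x))%R by (field; lra).
  assert (1 / 2 <= D / x)%R.
  { apply Rmult_le_reg_r with x; [lra|]. replace (D / x * x)%R with D by (field; lra). lra. }
  nra.
Qed.

Lemma harmonic_partial_add1 N :
  harmonic_partial (z + 1) N = harmonic_partial z N + / (z + 1) - 1 / (RtoC (INR N) + (z + 1)).
Proof.
  assert (H0 : z + 1 <> 0) by exact (avoids_nonpos_int_neq0 _ Hz).
  induction N as [|N IH].
  - rewrite !harmonic_partial_0. simpl INR. field. exact H0.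
  - rewrite !harmonic_partial_S, IH.
    replace (RtoC (INR (S N)) + (z + 1)) with (z + 1 + RtoC (INR (S N))) by ring.
    replace (RtoC (INR N) + (z + 1)) with (RtoC (INR (S N)) + z) by (rewrite RtoC_INR_S; ring).
    field. repeat split; first [exact H0 | apply Hz | apply INR_S_add_neq0 | apply RtoC_INR_S_neq0].
Qed.

Lemma HC_add1 : HC (z + 1) = HC z + / (z + 1).
Proof.
  assert (Hc := Ccauchy_seq_Clim _ harmonic_partial_Ccauchy).
  apply is_Clim_seq_Clim.
  apply (is_Clim_seq_ext_eventually _ _ _ 0 (fun N _ => harmonic_partial_add1 N)).
  replace (HC z + / (z + 1)) with (HC z + / (z + 1) - 0) by ring.
  apply is_Clim_seq_minus; [apply is_Clim_seq_plus; [exact Hc | apply is_Clim_seq_const] |].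
  apply is_Clim_seq_div_INR.
Qed.

End HarmonicShift.

Lemma HC_INR_S (s : C) (j : nat) : avoids_nonpos_int s ->
  HC (RtoC (INR (S j)) + s) = HC (RtoC (INR j) + s) + / (RtoC (INR (S j)) + s).
Proof.
  intros Hs. rewrite RtoC_INR_S_add. apply HC_add1.
  rewrite <- RtoC_INR_S_add. now apply avoids_nonpos_int_INR_add.
Qed.

Theorem corollary8 (n l1 u1 l2 u2 : nat) (f g : nat -> C) (s : C)
  (Hu1 : (u1 <= n)%nat)
  (Hid : forall t : C,
      sum_n_m (fun k => f k * pow_n t k * pow_n (1 - t) (n - k)) l1 u1
      = sum_n_m (fun k => g k * pow_n t k) l2 u2)
  (Hs_neg : forall m : nat, s <> - RtoC (INR (S m)))
  (Hs0 : s <> 0) :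
  sum_n_m (fun k => f k / ((RtoC (INR k) + s) *
                              Cbinom (RtoC (INR n) + s) (RtoC (INR k) + s))) l1 u1
    = sum_n_m (fun k => g k / (RtoC (INR k) + s)) l2 u2
  /\
  sum_n_m (fun k => f k / (RtoC (INR (k + 1)) *
                              RtoC (Binomial.C (n + 1) (k + 1)))) l1 u1
    = sum_n_m (fun k => g k / RtoC (INR (k + 1))) l2 u2
  /\
  sum_n_m (fun k => f k * (Hnat (n - k) - HC (RtoC (INR n) + s)) /
                      ((RtoC (INR k) + s) *
                         Cbinom (RtoC (INR n) + s) (RtoC (INR k) + s))) l1 u1
    = - sum_n_m (fun k => g k * HC (RtoC (INR k) + s) / (RtoC (INR k) + s)) l2 u2
  /\
  sum_n_m (fun k => f k * (Hnat (n - k) - Hnat (n + 1)) /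
                      (RtoC (INR (k + 1)) *
                         RtoC (Binomial.C (n + 1) (k + 1)))) l1 u1
    = - sum_n_m (fun k => g k * Hnat (k + 1) / RtoC (INR (k + 1))) l2 u2.
Proof.
  assert (Hs := avoids_nonpos_int_intro s Hs0 Hs_neg).
  assert (Hnat1 : forall j, Hnat (S j + 1) = Hnat (j + 1) + / (RtoC (INR (S j)) + 1)).
  { intros j. rewrite Nat.add_succ_l, Hnat_S, Nat.add_1_r. now rewrite (RtoC_INR_S (S j)). }
  destruct (bernstein_beta_identities n l1 u1 l2 u2 f g Hu1 Hid s Hs _ (fun j => HC_INR_S s j Hs))
    as [A1 A3].
  destruct (bernstein_beta_identities n l1 u1 l2 u2 f g Hu1 Hid 1 avoids_nonpos_int_1 _ Hnat1)
    as [A2 A4].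
  repeat split.
  - rewrite <- A1. apply sum_n_m_ext_loc. intros k Hk. unfold Cdiv.
    now rewrite Cbinom_INR_beta_nat by (auto; lia).
  - etransitivity; [| etransitivity; [exact A2 |]]; apply sum_n_m_ext_loc; intros k Hk; unfold Cdiv.
    + now rewrite binomial_beta_nat by lia.
    + now rewrite RtoC_INR_add1.
  - etransitivity; [| etransitivity; [exact (f_equal Copp A3) |]].
    + rewrite <- sum_n_m_Copp. apply sum_n_m_ext_loc. intros k Hk. unfold Cdiv.
      rewrite Cbinom_INR_beta_nat by (auto; lia). ring_C.
    + f_equal. apply sum_n_m_ext. intros k. unfold Cdiv. ring_C.
  - etransitivity; [| etransitivity; [exact (f_equal Copp A4) |]].
    + rewrite <- sum_n_m_Copp. apply sum_n_m_ext_loc. intros k Hk. unfold Cdiv.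
      rewrite binomial_beta_nat by lia. ring_C.
    + f_equal. apply sum_n_m_ext. intros k. unfold Cdiv. rewrite RtoC_INR_add1. ring_C.
Qed.
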